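(* Let $F$ be a subfield of $\mathbb{R}$, $r\in F$, and $n$ a positive integer. There is a quantifier-free formula $\theta(x,u)$ in the language of $T_{\mathrm{comm}}[F]$, in disjunctive normal form with at most $n$ disjuncts, such that $$T_{\mathrm{mult}}[F]\cup\{0\le x,\;x\le r,\;u=x^2\}\vdash\theta\quad\text{and}\quad T_{\mathrm{add}}[F]\cup\{u<2x-1\}\cup\{\theta\}\vdash\bot,$$ if and only if $r\le n/(n+1)$.
   Context: For $a\in F$, $f_a$ is a unary function symbol interpreted as $f_a(x)=ax$; a constant $c\in F$ is denoted by $f_c(1)$, $x^2$ denotes $x\times x$ and $2x$ denotes $f_2(x)$. $T_{\mathrm{add}}[F]$ is the set of sentences true in $(\mathbb{R},0,1,+,-,<,(f_a)_{a\in F})$, $T_{\mathrm{mult}}[F]$ the set of sentences true in $(\mathbb{R},0,1,\times,\div,<,(f_a)_{a\in F})$ with $x\div0=0$, and $T_{\mathrm{comm}}[F]=T_{\mathrm{add}}[F]\cap T_{\mathrm{mult}}[F]$, the theory of $(\mathbb{R},0,1,<,(f_a)_{a\in F})$. Free variables $x,u$ are treated as constants in the derivations. *)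

(* Deep embedding of first-order logic for the
   languages of T_add[F], T_mult[F], T_comm[F]; entailment "T u Gamma |- phi" is
   rendered as semantic consequence (Goedel completeness), with the free
   variables x := Var 0 and u := Var 1 playing the role of new constants. *)
From Stdlib Require Import Reals List.
Open Scope R_scope.

Definition is_subfield (F : R -> Prop) : Prop :=
  F 0 /\ F 1 /\
  (forall a b, F a -> F b -> F (a + b)) /\
  (forall a, F a -> F (- a)) /\
  (forall a b, F a -> F b -> F (a * b)) /\
  (forall a, F a -> a <> 0 -> F (/ a)).

(** Terms over the union of all symbols; languages are predicates below. *)
Inductive term : Type :=
| Var : nat -> term
| Zero : term
| One : term
| Add : term -> term -> term
| Sub : term -> term -> term
| Mul : term -> term -> term
| Div : term -> term -> term
| Scal : R -> term -> term.   (* Scal a t  is  f_a(t) *)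

Inductive formula : Type :=
| Fls : formula
| Eq : term -> term -> formula
| Lt : term -> term -> formula
| Not : formula -> formula
| And : formula -> formula -> formula
| Or : formula -> formula -> formula
| Imp : formula -> formula -> formula
| All : nat -> formula -> formula
| Ex : nat -> formula -> formula.

Fixpoint add_term (F : R -> Prop) (t : term) : Prop :=
  match t with
  | Var _ | Zero | One => True
  | Add s t | Sub s t => add_term F s /\ add_term F t
  | Mul _ _ | Div _ _ => False
  | Scal a s => F a /\ add_term F s
  end.
Fixpoint mult_term (F : R -> Prop) (t : term) : Prop :=
  match t with
  | Var _ | Zero | One => True
  | Mul s t | Div s t => mult_term F s /\ mult_term F t
  | Add _ _ | Sub _ _ => False
  | Scal a s => F a /\ mult_term F s
  end.
Fixpoint comm_term (F : R -> Prop) (t : term) : Prop :=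
  match t with
  | Var _ | Zero | One => True
  | Add _ _ | Sub _ _ | Mul _ _ | Div _ _ => False
  | Scal a s => F a /\ comm_term F s
  end.

Fixpoint in_lang (L : term -> Prop) (f : formula) : Prop :=
  match f with
  | Fls => True
  | Eq s t | Lt s t => L s /\ L t
  | Not g => in_lang L g
  | And g h | Or g h | Imp g h => in_lang L g /\ in_lang L h
  | All _ g | Ex _ g => in_lang L g
  end.

Fixpoint var_in (i : nat) (t : term) : Prop :=
  match t with
  | Var j => i = j
  | Zero | One => False
  | Add s t | Sub s t | Mul s t | Div s t => var_in i s \/ var_in i t
  | Scal _ s => var_in i s
  end.

Fixpoint free_in (i : nat) (f : formula) : Prop :=
  match f with
  | Fls => False
  | Eq s t | Lt s t => var_in i s \/ var_in i t
  | Not g => free_in i g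
  | And g h | Or g h | Imp g h => free_in i g \/ free_in i h
  | All j g | Ex j g => i <> j /\ free_in i g
  end.

Definition sentence (f : formula) : Prop := forall i, ~ free_in i f.

Record structure : Type := Structure {
  carrier : Type;
  s0 : carrier;
  s1 : carrier;
  sadd : carrier -> carrier -> carrier;
  ssub : carrier -> carrier -> carrier;
  smul : carrier -> carrier -> carrier;
  sdiv : carrier -> carrier -> carrier;
  sscal : R -> carrier -> carrier;
  slt : carrier -> carrier -> Prop }.

Fixpoint eval (M : structure) (env : nat -> carrier M) (t : term) : carrier M :=
  match t with
  | Var i => env i
  | Zero => s0 M
  | One => s1 M
  | Add s t => sadd M (eval M env s) (eval M env t)
  | Sub s t => ssub M (eval M env s) (eval M env t)
  | Mul s t => smul M (eval M env s) (eval M env t)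
  | Div s t => sdiv M (eval M env s) (eval M env t)
  | Scal a s => sscal M a (eval M env s)
  end.

Definition update {A : Type} (env : nat -> A) (i : nat) (d : A) : nat -> A :=
  fun j => if Nat.eqb j i then d else env j.

Fixpoint sat (M : structure) (env : nat -> carrier M) (f : formula) : Prop :=
  match f with
  | Fls => False
  | Eq s t => eval M env s = eval M env t
  | Lt s t => slt M (eval M env s) (eval M env t)
  | Not g => ~ sat M env g
  | And g h => sat M env g /\ sat M env h
  | Or g h => sat M env g \/ sat M env h
  | Imp g h => sat M env g -> sat M env h
  | All i g => forall d, sat M (update env i d) g
  | Ex i g => exists d, sat M (update env i d) g
  end.

(** The real field, with x / 0 = 0 and f_a(x) = a x. *)
Definition rdiv (x y : R) : R := if Req_EM_T y 0 then 0 else x / y.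

Definition Rstruct : structure :=
  Structure R 0 1 Rplus Rminus Rmult rdiv Rmult Rlt.

Definition Th (L : term -> Prop) (f : formula) : Prop :=
  in_lang L f /\ sentence f /\ forall env, sat Rstruct env f.

Definition T_add (F : R -> Prop) := Th (add_term F).
Definition T_mult (F : R -> Prop) := Th (mult_term F).

Definition models (M : structure) (T : formula -> Prop) : Prop :=
  forall f, T f -> forall env, sat M env f.

(** T u Gamma |- phi  (free variables of Gamma, phi treated as new constants,
    interpreted by env). *)
Definition entails (T : formula -> Prop) (Gamma : list formula) (phi : formula) : Prop :=
  forall M : structure, models M T ->
  forall env : nat -> carrier M, Forall (sat M env) Gamma -> sat M env phi.

Definition comm_literal (F : R -> Prop) (f : formula) : Prop :=
  exists s t, comm_term F s /\ comm_term F t /\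
    (f = Eq s t \/ f = Lt s t \/ f = Not (Eq s t) \/ f = Not (Lt s t)).

Definition Tru : formula := Not Fls.

Definition conj_of (c : list formula) : formula := fold_right And Tru c.
Definition dnf (D : list (list formula)) : formula := fold_right Or Fls (map conj_of D).

Definition vx : term := Var 0.
Definition vu : term := Var 1.

Definition Le (s t : term) : formula := Or (Lt s t) (Eq s t).

(* Both theories are complete theories of R, so both entailments are statements
   about the reals.

   If r <= n/(n+1), take the disjunction over k = 1..n of
   [(k-1) x <= k u /\ (k+1) x <= k].  On the parabola u = x^2 the k-th disjunct
   covers [(k-1)/k, k/(k+1)], and linearly each disjunct gives
   k u >= (k-1) x >= k (2x - 1).

   Conversely, an atom of T_comm[F] in x, u compares two multiples of x, u or 1,
   so it is a sign condition on A x + B u + C with one of A, B, C zero.  If such a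
   condition holds at (x1, x1^2) and (x2, x2^2) with 0 < x1 < x2, it holds at
   (x2, v) for all v in [x1 x2, x2^2] but at most one (when C = 0 use
   homogeneity).  For r > n/(n+1) the n+1 points 1 - q/(i+1) lie in (0, r] for a
   suitable q < 1; by pigeonhole two of them, x_i < x_j, satisfy the same
   disjunct, and since x_i x_j < 2 x_j - 1 that disjunct holds at a point below
   the line u = 2x - 1. *)
From Stdlib Require Import Reals List Permutation Lra Lia FunctionalExtensionality.
Open Scope R_scope.

Definition vars_xu (f : formula) : Prop := forall i, free_in i f -> i = 0%nat \/ i = 1%nat.

Lemma sat_conj_of M env c : sat M env (conj_of c) <-> Forall (sat M env) c.
Proof.
  induction c as [|l c IH]; simpl.
  - split; auto.
  - rewrite Forall_cons_iff, IH. tauto.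
Qed.

Lemma sat_dnf M env D :
  sat M env (dnf D) <-> exists c, In c D /\ sat M env (conj_of c).
Proof.
  induction D as [|c D IH]; simpl.
  - split; [intros [] | intros (c & [] & _)].
  - rewrite IH. split.
    + intros [H | (c' & Hin & H)]; eauto.
    + intros (c' & [<- | Hin] & H); eauto.
Qed.

Lemma vars_xu_conj_of_cons l c : vars_xu (conj_of (l :: c)) -> vars_xu l /\ vars_xu (conj_of c).
Proof. intros H; split; intros i Hi; apply H; simpl; auto. Qed.

Lemma vars_xu_dnf D : Forall (fun c => vars_xu (conj_of c)) D -> vars_xu (dnf D).
Proof.
  induction 1 as [|c D Hc _ IH]; intros i Hi; simpl in Hi; [contradiction|].
  destruct Hi as [Hi | Hi]; auto.
Qed.

Lemma vars_xu_dnf_In D c : vars_xu (dnf D) -> In c D -> vars_xu (conj_of c).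
Proof.
  induction D as [|c' D IH]; simpl; intros HD Hin i Hi; [contradiction|].
  destruct Hin as [<- | Hin].
  - apply HD; simpl; auto.
  - apply (IH (fun j Hj => HD j (or_intror Hj)) Hin i Hi).
Qed.

Lemma comm_term_mult_term F t : comm_term F t -> mult_term F t.
Proof. induction t; simpl; tauto. Qed.

Lemma comm_term_add_term F t : comm_term F t -> add_term F t.
Proof. induction t; simpl; tauto. Qed.

Lemma in_lang_dnf_comm F (L : term -> Prop) D :
  (forall t, comm_term F t -> L t) -> Forall (Forall (comm_literal F)) D -> in_lang L (dnf D).
Proof.
  intros HL. induction 1 as [|c D Hc _ IH]; simpl; split; auto.
  induction Hc as [|l c (s & t & Hs & Ht & Hl) _ IHc]; simpl; split; auto.
  destruct Hl as [-> | [-> | [-> | ->]]]; simpl; auto.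
Qed.

Lemma update_xu_same {A} (env : nat -> A) :
  update (update env 0%nat (env 0%nat)) 1%nat (env 1%nat) = env.
Proof.
  apply functional_extensionality; intros j; unfold update.
  destruct (Nat.eqb_spec j 1); [congruence|].
  destruct (Nat.eqb_spec j 0); congruence.
Qed.

Lemma Rstruct_models_Th L : models Rstruct (Th L).
Proof. intros f (_ & _ & H). exact H. Qed.

(* The universal closure of [conj_of Gamma -> phi] lies in [Th L]. *)
Lemma entails_Th_of_real L Gamma phi :
  in_lang L (conj_of Gamma) -> in_lang L phi ->
  vars_xu (conj_of Gamma) -> vars_xu phi ->
  (forall env, Forall (sat Rstruct env) Gamma -> sat Rstruct env phi) ->
  entails (Th L) Gamma phi.
Proof.
  intros HLG HLphi HvG Hvphi Hreal M HM env HGamma.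
  set (closure := All 0 (All 1 (Imp (conj_of Gamma) phi))).
  assert (Hclosure : Th L closure).
  { split; [|split].
    - simpl; tauto.
    - intros i (Hi0 & Hi1 & [Hi | Hi]); [apply HvG in Hi | apply Hvphi in Hi]; lia.
    - intros env' d0 d1. simpl. rewrite sat_conj_of. apply Hreal. }
  specialize (HM closure Hclosure env (env 0%nat) (env 1%nat)).
  cbn [sat] in HM. rewrite update_xu_same, sat_conj_of in HM. exact (HM HGamma).
Qed.

(* On the parabola [u = x^2], [x >= 0], cell [k] is [x = 0] together with
   [(k-1)/k <= x <= k/(k+1)]. *)
Definition cell (k : nat) : list formula :=
  Not (Lt (Scal (INR k) vu) (Scal (INR k - 1) vx)) ::
  Not (Lt (Scal (INR k) One) (Scal (INR k + 1) vx)) :: nil.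

Definition cells (n : nat) : list (list formula) := map cell (seq 1 n).

Lemma sat_cell env k :
  sat Rstruct env (conj_of (cell k)) <->
  (INR k - 1) * env 0%nat <= INR k * env 1%nat /\ (INR k + 1) * env 0%nat <= INR k.
Proof. simpl. split; intros H; repeat split; lra. Qed.

Lemma subfield_INR F : is_subfield F -> forall k, F (INR k).
Proof.
  intros (H0 & H1 & Hadd & _). induction k as [|k IH]; [exact H0|].
  rewrite S_INR. auto.
Qed.

Lemma cells_comm_literal F n : is_subfield F -> Forall (Forall (comm_literal F)) (cells n).
Proof.
  intros HF. pose proof HF as (_ & F1 & Fadd & Fopp & _).
  pose proof (subfield_INR F HF) as FINR.
  apply Forall_forall; intros c Hc. apply in_map_iff in Hc as (k & <- & _).
  pose proof (FINR k). repeat constructor.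
  - exists (Scal (INR k) vu), (Scal (INR k - 1) vx). simpl; unfold Rminus. intuition auto.
  - exists (Scal (INR k) One), (Scal (INR k + 1) vx). simpl. intuition auto.
Qed.

Lemma cells_vars_xu n : vars_xu (dnf (cells n)).
Proof.
  apply vars_xu_dnf, Forall_forall; intros c Hc.
  apply in_map_iff in Hc as (k & <- & _).
  intros i Hi; simpl in Hi; unfold vx, vu in Hi; simpl in Hi; lia.
Qed.

Lemma exists_cell_index m x : (1 <= m)%nat -> 0 <= x -> (INR m + 1) * x <= INR m ->
  exists k, (1 <= k <= m)%nat /\ INR k - 1 <= INR k * x /\ (INR k + 1) * x <= INR k.
Proof.
  induction 1 as [|m Hm IH]; intros Hx Hxm.
  - exists 1%nat. simpl in *. split; [lia | lra].
  - destruct (Rle_or_lt ((INR m + 1) * x) (INR m)) as [Hle | Hlt].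
    + destruct (IH Hx Hle) as (k & Hk & Hcell). exists k. split; [lia | exact Hcell].
    + exists (S m). split; [lia|]. rewrite S_INR in *. lra.
Qed.

Lemma cells_sat_on_parabola n r env : (1 <= n)%nat -> r <= INR n / (INR n + 1) ->
  0 <= env 0%nat <= r -> env 1%nat = env 0%nat * env 0%nat ->
  sat Rstruct env (dnf (cells n)).
Proof.
  intros Hn Hr Hx Hu.
  assert (Hn1 : 0 < INR n + 1) by (pose proof (pos_INR n); lra).
  assert (Hxn : (INR n + 1) * env 0%nat <= INR n).
  { apply Rle_trans with ((INR n + 1) * r); [apply Rmult_le_compat_l; lra|].
    apply Rmult_le_compat_l with (r := INR n + 1) in Hr; [|lra].
    replace ((INR n + 1) * (INR n / (INR n + 1))) with (INR n) in Hr by (field; lra).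
    exact Hr. }
  destruct (exists_cell_index n (env 0%nat) Hn (proj1 Hx) Hxn) as (k & Hk & Hlo & Hhi).
  apply sat_dnf. exists (cell k). split.
  - apply in_map, in_seq. lia.
  - apply sat_cell. rewrite Hu. split; [nra | exact Hhi].
Qed.

Lemma cells_above_tangent n env :
  sat Rstruct env (dnf (cells n)) -> 2 * env 0%nat - 1 <= env 1%nat.
Proof.
  intros (c & Hc & Hsat)%sat_dnf.
  apply in_map_iff in Hc as (k & <- & Hk). apply in_seq in Hk.
  apply sat_cell in Hsat as [Hlo Hhi].
  assert (Hk1 : 1 <= INR k) by (apply (le_INR 1); lia).
  assert (INR k * (env 1%nat - (2 * env 0%nat - 1)) >= 0) by lra.
  nra.
Qed.

Definition env_xu (x u : R) : nat -> R :=
  fun i => match i with 0%nat => x | 1%nat => u | _ => 0 end.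

Lemma comm_term_eval_xu F t : comm_term F t ->
  (forall i, var_in i t -> i = 0%nat \/ i = 1%nat) ->
  exists a b c, ((b = 0 /\ c = 0) \/ (a = 0 /\ c = 0) \/ (a = 0 /\ b = 0)) /\
    forall x u, eval Rstruct (env_xu x u) t = a * x + b * u + c.
Proof.
  induction t as [j | | | | | | | k t IH]; simpl; intros Ht Hv; try contradiction.
  - destruct (Hv j eq_refl) as [-> | ->].
    + exists 1, 0, 0. split; [lra | intros; simpl; ring].
    + exists 0, 1, 0. split; [lra | intros; simpl; ring].
  - exists 0, 0, 0. split; [lra | intros; simpl; ring].
  - exists 0, 0, 1. split; [lra | intros; simpl; ring].
  - destruct (IH (proj2 Ht) Hv) as (a & b & c & Hshape & He).
    exists (k * a), (k * b), (k * c). split.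
    + destruct Hshape as [[-> ->] | [[-> ->] | [-> ->]]]; lra.
    + intros x u. rewrite He. ring.
Qed.

Definition scale_invariant (P : R -> Prop) : Prop :=
  forall t z, 0 < t -> P z -> P (t * z).

Definition affine_interval_closed (P : R -> Prop) : Prop :=
  forall B K w1 w2, w1 < w2 -> P (B * w1 + K) -> P (B * w2 + K) ->
  exists p, forall v, w1 <= v <= w2 -> v <> p -> P (B * v + K).

Definition sign_condition (P : R -> Prop) : Prop :=
  scale_invariant P /\ affine_interval_closed P.

Lemma sign_condition_lt0 : sign_condition (fun z => z < 0).
Proof.
  split.
  - intros t z Ht Hz. nra.
  - intros B K w1 w2 Hw H1 H2. exists 0. intros v Hv _.
    destruct (Rle_or_lt 0 B); nra.
Qed.

Lemma sign_condition_nlt0 : sign_condition (fun z => ~ z < 0).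
Proof.
  split.
  - intros t z Ht Hz Hneg. apply Hz. nra.
  - intros B K w1 w2 Hw H1%Rnot_lt_le H2%Rnot_lt_le. exists 0. intros v Hv _.
    apply Rle_not_lt. destruct (Rle_or_lt 0 B); nra.
Qed.

Lemma sign_condition_eq0 : sign_condition (fun z => z = 0).
Proof.
  split.
  - intros t z _ ->. ring.
  - intros B K w1 w2 Hw H1 H2. exists 0. intros v _ _.
    assert (HB : B * (w2 - w1) = 0) by lra.
    apply Rmult_integral in HB as [-> | HB]; lra.
Qed.

Lemma sign_condition_neq0 : sign_condition (fun z => z <> 0).
Proof.
  split.
  - intros t z Ht Hz. apply Rmult_integral_contrapositive_currified; lra.
  - intros B K w1 w2 _ H1 _. destruct (Req_dec B 0) as [-> | HB].
    + exists 0. intros v _ _. replace (0 * v + K) with (0 * w1 + K) by ring. exact H1.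
    + exists (- K / B). intros v _ Hv Hz. apply Hv. field_simplify_eq; [lra | exact HB].
Qed.

(* When [C = 0], scaling by [x2 / x1] moves the first point to [(x2, x1 x2)]. *)
Lemma sign_condition_on_parabola P A B C x1 x2 : sign_condition P ->
  (A = 0 \/ B = 0 \/ C = 0) -> 0 < x1 < x2 ->
  P (A * x1 + B * (x1 * x1) + C) -> P (A * x2 + B * (x2 * x2) + C) ->
  exists p, forall v, x1 * x2 <= v <= x2 * x2 -> v <> p -> P (A * x2 + B * v + C).
Proof.
  intros [Hscale Hinterval] Hzero Hx H1 H2.
  destruct Hzero as [-> | [-> | ->]].
  - destruct (Hinterval B C (x1 * x1) (x2 * x2)) as [p Hp].
    + nra.
    + now replace (B * (x1 * x1) + C) with (0 * x1 + B * (x1 * x1) + C) by ring.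
    + now replace (B * (x2 * x2) + C) with (0 * x2 + B * (x2 * x2) + C) by ring.
    + exists p. intros v Hv Hvp. replace (0 * x2 + B * v + C) with (B * v + C) by ring.
      apply Hp; [nra | exact Hvp].
  - exists 0. intros v _ _.
    now replace (A * x2 + 0 * v + C) with (A * x2 + 0 * (x2 * x2) + C) by ring.
  - assert (H1' : P (B * (x1 * x2) + A * x2)).
    { replace (B * (x1 * x2) + A * x2) with ((x2 / x1) * (A * x1 + B * (x1 * x1) + 0))
        by (field; lra).
      apply Hscale; [apply Rdiv_lt_0_compat; lra | exact H1]. }
    destruct (Hinterval B (A * x2) (x1 * x2) (x2 * x2)) as [p Hp].
    + nra.
    + exact H1'.
    + now replace (B * (x2 * x2) + A * x2) with (A * x2 + B * (x2 * x2) + 0) by ring.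
    + exists p. intros v Hv Hvp. replace (A * x2 + B * v + 0) with (B * v + A * x2) by ring.
      apply Hp; assumption.
Qed.

(* Both sides of a literal are multiples of [x], [u] or [1], so their difference
   misses at least one of the three. *)
Lemma comm_literal_sign_condition F l : comm_literal F l -> vars_xu l ->
  exists P A B C, sign_condition P /\ (A = 0 \/ B = 0 \/ C = 0) /\
    forall x u, sat Rstruct (env_xu x u) l <-> P (A * x + B * u + C).
Proof.
  intros (s & t & Hs & Ht & Hl) Hvars.
  assert (Hvs : forall i, var_in i s -> i = 0%nat \/ i = 1%nat)
    by (intros i Hi; apply Hvars; destruct Hl as [-> | [-> | [-> | ->]]]; simpl; auto).
  assert (Hvt : forall i, var_in i t -> i = 0%nat \/ i = 1%nat)
    by (intros i Hi; apply Hvars; destruct Hl as [-> | [-> | [-> | ->]]]; simpl; auto).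
  destruct (comm_term_eval_xu F s Hs Hvs) as (a1 & b1 & c1 & Hshape1 & Es).
  destruct (comm_term_eval_xu F t Ht Hvt) as (a2 & b2 & c2 & Hshape2 & Et).
  assert (Hzero : a1 - a2 = 0 \/ b1 - b2 = 0 \/ c1 - c2 = 0)
    by (destruct Hshape1 as [[? ?] | [[? ?] | [? ?]]];
        destruct Hshape2 as [[? ?] | [[? ?] | [? ?]]]; lra).
  destruct Hl as [-> | [-> | [-> | ->]]];
    [ exists (fun z => z = 0) | exists (fun z => z < 0)
    | exists (fun z => z <> 0) | exists (fun z => ~ z < 0) ];
    exists (a1 - a2), (b1 - b2), (c1 - c2);
    (split; [auto using sign_condition_eq0, sign_condition_lt0,
                        sign_condition_neq0, sign_condition_nlt0 |]);
    split; try exact Hzero; intros x u; simpl; rewrite Es, Et;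
    split; intros H; try intros H'; lra.
Qed.

Lemma comm_literal_on_parabola F l x1 x2 : comm_literal F l -> vars_xu l -> 0 < x1 < x2 ->
  sat Rstruct (env_xu x1 (x1 * x1)) l -> sat Rstruct (env_xu x2 (x2 * x2)) l ->
  exists p, forall v, x1 * x2 <= v <= x2 * x2 -> v <> p -> sat Rstruct (env_xu x2 v) l.
Proof.
  intros Hl Hvars Hx H1 H2.
  destruct (comm_literal_sign_condition F l Hl Hvars) as (P & A & B & C & HP & Hzero & Hsat).
  rewrite Hsat in H1, H2.
  destruct (sign_condition_on_parabola P A B C x1 x2 HP Hzero Hx H1 H2) as [p Hp].
  exists p. intros v Hv Hvp. apply Hsat, Hp; assumption.
Qed.

Lemma conj_on_parabola F c x1 x2 : Forall (comm_literal F) c -> vars_xu (conj_of c) ->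
  0 < x1 < x2 ->
  sat Rstruct (env_xu x1 (x1 * x1)) (conj_of c) -> sat Rstruct (env_xu x2 (x2 * x2)) (conj_of c) ->
  exists E, forall v, x1 * x2 <= v <= x2 * x2 -> ~ In v E -> sat Rstruct (env_xu x2 v) (conj_of c).
Proof.
  intros Hc Hvars Hx. revert Hvars.
  induction Hc as [|l c Hl Hc IH]; intros Hvars.
  - exists nil. intros; simpl; auto.
  - intros [H1l H1c] [H2l H2c]. apply vars_xu_conj_of_cons in Hvars as [Hvl Hvc].
    destruct (comm_literal_on_parabola F l x1 x2 Hl Hvl Hx H1l H2l) as [p Hp].
    destruct (IH Hvc H1c H2c) as [E HE].
    exists (p :: E). intros v Hv Hnotin. split.
    + apply Hp; [exact Hv |]. intros ->. apply Hnotin. left; reflexivity.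
    + apply HE; [exact Hv |]. intros Hin. apply Hnotin. right; exact Hin.
Qed.

Lemma exists_not_In_interval (E : list R) a b : a < b -> exists v, a <= v < b /\ ~ In v E.
Proof.
  revert a b. induction E as [|p E IH]; intros a b Hab.
  - exists a. split; [lra | auto].
  - destruct (Rlt_or_le p ((a + b) / 2)) as [Hp | Hp].
    + destruct (IH ((a + b) / 2) b) as (v & Hv & Hnotin); [lra|].
      exists v. split; [lra|]. intros [-> | Hin]; [lra | auto].
    + destruct (IH a ((a + b) / 2)) as (v & Hv & Hnotin); [lra|].
      exists v. split; [lra|]. intros [-> | Hin]; [lra | auto].
Qed.

Lemma conj_below_tangent F c x1 x2 : Forall (comm_literal F) c -> vars_xu (conj_of c) ->
  0 < x1 < x2 -> x1 * x2 < 2 * x2 - 1 ->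
  sat Rstruct (env_xu x1 (x1 * x1)) (conj_of c) -> sat Rstruct (env_xu x2 (x2 * x2)) (conj_of c) ->
  exists u, u < 2 * x2 - 1 /\ sat Rstruct (env_xu x2 u) (conj_of c).
Proof.
  intros Hc Hvars Hx Hgap H1 H2.
  destruct (conj_on_parabola F c x1 x2 Hc Hvars Hx H1 H2) as [E HE].
  destruct (exists_not_In_interval E (x1 * x2) (Rmin (x2 * x2) (2 * x2 - 1)))
    as (v & Hv & Hnotin); [apply Rmin_glb_lt; nra|].
  pose proof (Rmin_l (x2 * x2) (2 * x2 - 1)). pose proof (Rmin_r (x2 * x2) (2 * x2 - 1)).
  exists v. split; [lra|]. apply HE; [lra | exact Hnotin].
Qed.

(* For [i < j], [sample q i * sample q j < 2 * sample q j - 1] reduces to [q < j - i]. *)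
Definition sample (q : R) (i : nat) : R := 1 - q / (INR i + 1).

Lemma sample_below_tangent q i j : 0 < q < 1 -> (i < j)%nat ->
  0 < sample q i < sample q j /\ sample q i * sample q j < 2 * sample q j - 1.
Proof.
  intros Hq Hij. unfold sample.
  assert (HI : 1 <= INR i + 1) by (pose proof (pos_INR i); lra).
  assert (HIJ : INR i + 1 + 1 <= INR j + 1)
    by (rewrite <- S_INR; apply Rplus_le_compat_r, le_INR; lia).
  set (I := INR i + 1) in *. set (J := INR j + 1) in *.
  assert (E1 : 1 - q / I = (I - q) / I) by (field; lra).
  assert (E2 : (1 - q / J) - (1 - q / I) = q * (J - I) / (I * J)) by (field; lra).
  assert (E3 : 2 * (1 - q / J) - 1 - (1 - q / I) * (1 - q / J) = q * (J - I - q) / (I * J))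
    by (field; lra).
  assert (P1 : 0 < (I - q) / I) by (apply Rdiv_lt_0_compat; lra).
  assert (P2 : 0 < q * (J - I) / (I * J))
    by (apply Rdiv_lt_0_compat; apply Rmult_lt_0_compat; lra).
  assert (P3 : 0 < q * (J - I - q) / (I * J))
    by (apply Rdiv_lt_0_compat; apply Rmult_lt_0_compat; lra).
  lra.
Qed.

Lemma exists_samples_le n r : INR n / (INR n + 1) < r ->
  exists q, 0 < q < 1 /\ forall i, (i <= n)%nat -> sample q i <= r.
Proof.
  intros Hr. pose proof (pos_INR n) as Hn.
  assert (Hslack : (INR n + 1) * (1 - r) < 1).
  { apply (Rmult_lt_compat_r (INR n + 1)) in Hr; [|lra].
    unfold Rdiv in Hr. rewrite Rmult_assoc, Rinv_l in Hr; lra. }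
  pose proof (Rmax_l (1 / 2) ((INR n + 1) * (1 - r))) as Hq_half.
  pose proof (Rmax_r (1 / 2) ((INR n + 1) * (1 - r))) as Hq_slack.
  set (q := Rmax (1 / 2) ((INR n + 1) * (1 - r))) in *.
  exists q. split; [split; [lra | apply Rmax_lub_lt; lra]|].
  intros i Hi. unfold sample.
  assert (Hin : INR i + 1 <= INR n + 1) by (apply Rplus_le_compat_r, le_INR; exact Hi).
  assert (Hqi : q / (INR n + 1) <= q / (INR i + 1))
    by (apply Rmult_le_compat_l; [lra | apply Rinv_le_contravar; pose proof (pos_INR i); lra]).
  assert (Hqn : 1 - r <= q / (INR n + 1)).
  { apply (Rmult_le_reg_r (INR n + 1)); [lra|].
    unfold Rdiv. rewrite Rmult_assoc, Rinv_l; lra. }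
  lra.
Qed.

Lemma pigeonhole_seq {A} (Rel : nat -> A -> Prop) (l : list A) n :
  (length l <= n)%nat -> (forall i, (i <= n)%nat -> exists a, In a l /\ Rel i a) ->
  exists i j a, (i < j <= n)%nat /\ In a l /\ Rel i a /\ Rel j a.
Proof.
  intros Hlen Hall.
  assert (Hcover : Forall (fun i => Exists (Rel i) l) (seq 0 (S n))).
  { apply Forall_forall. intros i Hi%in_seq. apply Exists_exists, Hall. lia. }
  destruct (Permutation_pigeonhole_rel Rel Hcover)
    as (i & j & rest & Hperm & a & Ha & Hi & Hj); [rewrite length_seq; lia|].
  assert (Hnodup : NoDup (i :: j :: rest)) by exact (Permutation_NoDup Hperm (seq_NoDup _ _)).
  assert (Hij : i <> j) by (inversion Hnodup as [|? ? Hnotin]; intros ->; apply Hnotin; left; auto).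
  assert (Hin : forall k, In k (i :: j :: rest) -> (k <= n)%nat)
    by (intros k Hk; apply Permutation_sym, (Permutation_in k) in Hperm as Hk';
        [apply in_seq in Hk'; lia | exact Hk]).
  pose proof (Hin i (or_introl eq_refl)). pose proof (Hin j (or_intror (or_introl eq_refl))).
  destruct (Nat.lt_gt_cases i j) as [[Hlt | Hgt] _]; [exact Hij | |].
  - exists i, j, a. repeat split; auto; lia.
  - exists j, i, a. repeat split; auto; lia.
Qed.

Lemma dnf_on_parabola_below_tangent F D n r :
  INR n / (INR n + 1) < r -> (length D <= n)%nat ->
  Forall (Forall (comm_literal F)) D -> vars_xu (dnf D) ->
  (forall x, 0 <= x <= r -> sat Rstruct (env_xu x (x * x)) (dnf D)) ->
  exists x u, u < 2 * x - 1 /\ sat Rstruct (env_xu x u) (dnf D).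
Proof.
  intros Hr Hlen Hlit Hvars Hparabola.
  destruct (exists_samples_le n r Hr) as (q & Hq & Hle).
  set (on_sample i c := sat Rstruct (env_xu (sample q i) (sample q i * sample q i)) (conj_of c)).
  destruct (pigeonhole_seq on_sample D n Hlen) as (i & j & c & [Hij _] & Hc & Hi & Hj).
  { intros i Hi. apply sat_dnf, Hparabola. split; [|exact (Hle i Hi)].
    apply Rlt_le, (sample_below_tangent q i (S i) Hq (Nat.lt_succ_diag_r i)). }
  destruct (sample_below_tangent q i j Hq Hij) as [Hx Hgap].
  rewrite Forall_forall in Hlit.
  destruct (conj_below_tangent F c (sample q i) (sample q j) (Hlit c Hc)
              (vars_xu_dnf_In D c Hvars Hc) Hx Hgap Hi Hj) as (u & Hu & Hsat).
  exists (sample q j), u. split; [exact Hu|]. apply sat_dnf. eauto.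
Qed.

Lemma sat_Le env s t :
  sat Rstruct env (Le s t) <-> eval Rstruct env s <= eval Rstruct env t.
Proof. simpl. split; intros H; [lra | destruct (Rle_lt_or_eq _ _ H); auto]. Qed.

Theorem theorem5p4 (F : R -> Prop) (HF : is_subfield F) (r : R) (Hr : F r)
  (n : nat) (Hn : (0 < n)%nat) :
  (exists D : list (list formula),
      (length D <= n)%nat /\
      Forall (Forall (comm_literal F)) D /\
      (forall i, free_in i (dnf D) -> i = 0%nat \/ i = 1%nat) /\
      entails (T_mult F)
        (Le Zero vx :: Le vx (Scal r One) :: Eq vu (Mul vx vx) :: nil) (dnf D) /\
      entails (T_add F)
        (Lt vu (Sub (Scal 2 vx) One) :: dnf D :: nil) Fls)
  <-> r <= INR n / (INR n + 1).
Proof.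
  split.
  - intros (D & Hlen & Hlit & Hvars & Hmult & Hadd).
    apply Rnot_lt_le. intros Hlt.
    destruct (dnf_on_parabola_below_tangent F D n r Hlt Hlen Hlit Hvars) as (x & u & Hu & Hsat).
    + intros x Hx. apply (Hmult Rstruct (Rstruct_models_Th _)).
      repeat apply Forall_cons; try apply sat_Le; simpl; auto; lra.
    + apply (Hadd Rstruct (Rstruct_models_Th _) (env_xu x u)).
      repeat apply Forall_cons; simpl; auto; lra.
  - intros Hle. pose proof (cells_comm_literal F n HF) as Hlit.
    assert (F2 : F 2) by (replace 2 with (INR 2) by (simpl; ring); apply subfield_INR, HF).
    exists (cells n). repeat split.
    + unfold cells. rewrite length_map, length_seq. lia.
    + exact Hlit.
    + apply cells_vars_xu.
    + apply entails_Th_of_real.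
      * simpl. tauto.
      * exact (in_lang_dnf_comm F _ _ (comm_term_mult_term F) Hlit).
      * intros i Hi. simpl in Hi. unfold vx, vu in Hi. simpl in Hi. lia.
      * apply cells_vars_xu.
      * intros env Henv. rewrite !Forall_cons_iff in Henv.
        destruct Henv as (H0x & Hxr & Hu & _).
        apply (cells_sat_on_parabola n r); [lia | exact Hle | | exact Hu].
        rewrite sat_Le in H0x, Hxr. simpl in H0x, Hxr. lra.
    + apply entails_Th_of_real.
      * pose proof (in_lang_dnf_comm F _ _ (comm_term_add_term F) Hlit). simpl. tauto.
      * exact I.
      * intros i [Hi | [Hi | []]]; [simpl in Hi; unfold vx, vu in Hi; simpl in Hi; lia |].
        apply (cells_vars_xu n i Hi).
      * intros i [].
      * intros env Henv. rewrite !Forall_cons_iff in Henv.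
        destruct Henv as (Hu & Hcells & _).
        apply cells_above_tangent in Hcells. simpl in Hu. lra.
Qed.
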